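(* Let $R\ge1$, $\mathbf{x}$ a vector of pairwise distinct reals and $\mathbf{c}=(c_1,\dots,c_R)\in\mathbb{R}^R$ with $c_k\ne0$ for all $k$. Then the $R$ eigenvalues of $B(\mathbf{x},\mathbf{c})$ are pairwise distinct (each eigenvalue is simple).
   Context: $B(\mathbf{x},\mathbf{c})$ is the $R\times R$ matrix with entries $b_{m,m}=0$ and $b_{m,n}=\frac{c_mc_n}{x_m-x_n}$ for $m\ne n$. *)

From HB Require Import structures.
From mathcomp Require Import all_boot all_order all_algebra.
Set Implicit Arguments. Unset Strict Implicit. Unset Printing Implicit Defensive.
Import Order.TTheory GRing.Theory Num.Theory.
Local Open Scope ring_scope.

Definition Bmat (F : fieldType) (n : nat) (x c : 'I_n -> F) : 'M[F]_n :=
  \matrix_(i, j) (if i == j then 0 else c i * c j / (x i - x j)).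

From HB Require Import structures.
From mathcomp Require Import all_boot all_order all_algebra.
From mathcomp Require Import ring.
Set Implicit Arguments. Unset Strict Implicit. Unset Printing Implicit Defensive.
Import Order.TTheory GRing.Theory Num.Theory.
Local Open Scope ring_scope.

(* B is skew-Hermitian, hence normal, so by the spectral theorem B is unitarily
   diagonalisable: P B = diag(d) P with P unitary.  Its characteristic
   polynomial is therefore prod_i (X - d_i), and it remains to see that the d_i
   are pairwise distinct.  The key identity is the commutator relation
       X B - B X = c c^T - diag(c_k^2),     X = diag(x_k),
   which implies that no nonzero (left) eigenvector v of B is orthogonal to c:
   pairing the relation with v on both sides kills the left-hand side (the
   eigenvalues of a skew-Hermitian matrix are imaginary) and leaves
   sum_k c_k^2 |v_k|^2 = 0.  In other words c is a cyclic vector for B, and a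
   normal matrix with a cyclic vector has a simple spectrum: if d_i = d_j with
   i <> j, a suitable combination of the rows i and j of P is an eigenvector
   orthogonal to c, hence zero, which contradicts the orthonormality of P. *)

Lemma char_poly_conj (R : comUnitRingType) (n : nat) (A P : 'M[R]_n) :
  P \in unitmx -> char_poly (invmx P *m A *m P) = char_poly A.
Proof.
move=> Pu; pose Q := map_mx polyC P; pose Qi := map_mx polyC (invmx P).
have QiQ : Qi *m Q = 1%:M by rewrite -map_mxM mulVmx // map_mx1.
rewrite /char_poly.
have -> : char_poly_mx (invmx P *m A *m P) = Qi *m char_poly_mx A *m Q.
  rewrite /char_poly_mx mulmxBr mulmxBl scalar_mxC -[_ *m Qi *m Q]mulmxA.
  by rewrite QiQ mulmx1 -!map_mxM.
by rewrite !det_mulmx mulrAC -det_mulmx QiQ det1 mul1r.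
Qed.

Section SkewHermitian.
Local Open Scope sesquilinear_scope.
Variables (C : numClosedFieldType) (n : nat).
Implicit Types (A B X : 'M[C]_n) (v w : 'rV[C]_n).

Lemma skew_normalmx A : A ^t* = - A -> A \is normalmx.
Proof. by move=> skewA; apply/normalmxP; rewrite skewA mulmxN mulNmx. Qed.

Lemma dotmx_mulmx_adj M v w : dotmx (v *m M) w = dotmx v (w *m M ^t*).
Proof. by rewrite !dotmxE trmx_mul map_mxM trmxCK mulmxA. Qed.

Lemma posdiag_form_eq0 (d : 'rV[C]_n) v :
  (forall k, 0 < d 0 k) -> dotmx (v *m diag_mx d) v = 0 -> v = 0.
Proof.
move=> d_gt0.
have -> : dotmx (v *m diag_mx d) v = \sum_k d 0 k * (v 0 k * (v 0 k)^*).
  rewrite dotmxE mul_mx_diag mxE; apply: eq_bigr => k _.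
  by rewrite !mxE mulrAC mulrC.
move=> /psumr_eq0P vanish; apply/rowP => k; apply/eqP; rewrite mxE -mul_conjC_eq0.
have /eqP := vanish (fun j _ => mulr_ge0 (ltW (d_gt0 j)) (mul_conjC_ge0 _)) k isT.
by rewrite mulf_eq0 (gt_eqF (d_gt0 k)).
Qed.

Lemma skew_eigvec_orth_eq0 B X (u : 'cV[C]_n) (u' d : 'rV[C]_n) v lam :
  B ^t* = - B -> X *m B - B *m X = u *m u' - diag_mx d ->
  (forall k, 0 < d 0 k) -> v *m B = lam *: v -> v *m u = 0 -> v = 0.
Proof.
move=> skewB commB d_gt0 eig_v vu0.
have adj w1 w2 : dotmx (w1 *m B) w2 = - dotmx w1 (w2 *m B).
  by rewrite dotmx_mulmx_adj skewB mulmxN linearNr.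
have re_lam : (lam + lam^*) * dotmx v v = 0.
  have := adj v v; rewrite eig_v linearZl_LR linearZr /= => lamE.
  by rewrite mulrDl lamE addNr.
have pair_comm : dotmx (v *m (X *m B - B *m X)) v
                 = - ((lam + lam^*) * dotmx (v *m X) v).
  rewrite mulmxBr linearBl /= !mulmxA adj eig_v linearZr -scalemxAl linearZl_LR /=.
  ring.
have pair_diag : dotmx (v *m (X *m B - B *m X)) v
                 = - dotmx (v *m diag_mx d) v.
  by rewrite commB mulmxBr mulmxA vu0 mul0mx sub0r linearNl.
case: (eqVneq (lam + lam^*) 0) => [re0|re_neq0].
  apply: (posdiag_form_eq0 d_gt0); apply/eqP; rewrite -oppr_eq0 -pair_diag.
  by rewrite pair_comm re0 mul0r oppr0.
apply/eqP; rewrite -(dnorm_eq0 (@dotmx C n)); move/eqP: re_lam.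
by rewrite mulf_eq0 (negbTE re_neq0).
Qed.

Lemma char_poly_normal A : A \is normalmx ->
  char_poly A = \prod_i ('X - (spectral_diag A 0 i)%:P).
Proof.
move=> /orthomx_spectralP defA.
have := char_poly_conj (diag_mx (spectral_diag A)) (spectral_unit A).
rewrite -defA => ->.
rewrite char_poly_trig ?diag_mx_is_trig //; apply: eq_bigr => i _.
by rewrite mxE eqxx mulr1n.
Qed.

Lemma normal_simple_spectrum A (u : 'cV[C]_n) : A \is normalmx ->
  (forall v lam, v *m A = lam *: v -> v *m u = 0 -> v = 0) ->
  injective (fun i => spectral_diag A 0 i).
Proof.
move=> /orthomx_spectralP defA cyclic_u i j /= dij.
set P := spectralmx A in defA *; set d := spectral_diag A in defA dij *.
have ortho := row_unitarymxP (spectral_unitarymx A : P \is unitarymx).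
have PA : P *m A = diag_mx d *m P.
  by rewrite defA !mulmxA mulmxV ?spectral_unit // mul1mx.
have eig k : row k P *m A = d 0 k *: row k P.
  by rewrite -row_mul PA mul_diag_mx; apply/rowP => l; rewrite !mxE.
have coord_neq0 k : (row k P *m u) 0 0 != 0.
  apply/eqP => uk0; have Pk0 : row k P = 0.
    by apply: (cyclic_u _ _ (eig k)); apply/rowP => r; rewrite ord1 [RHS]mxE.
  by have := ortho k k; rewrite Pk0 linear0l eqxx => /eqP; rewrite eq_sym oner_eq0.
apply/eqP/negPn/negP => neq_ij.
pose a := (row j P *m u) 0 0; pose b := (row i P *m u) 0 0.
pose v := a *: row i P - b *: row j P.
have v0 : v = 0.
  apply: (cyclic_u _ (d 0 i)).
    by rewrite mulmxBl -!scalemxAl !eig dij scalerBr !scalerA (mulrC a) (mulrC b).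
  apply/matrixP => r s; rewrite !ord1 mulmxBl -!scalemxAl !mxE.
  by rewrite /a /b !mxE mulrC subrr.
move/eqP: (coord_neq0 i); apply; apply/eqP; rewrite -oppr_eq0 -/b.
have := congr1 (fun w => dotmx w (row j P)) v0.
rewrite /= linearBl /= !linearZl_LR /= !ortho eqxx (negbTE neq_ij) linear0l.
by rewrite mulr0 mulr1 sub0r => ->.
Qed.

End SkewHermitian.

Lemma Bmat_commutator (F : fieldType) (n : nat) (x c : 'I_n -> F) :
  injective x ->
  diag_mx (\row_k x k) *m Bmat x c - Bmat x c *m diag_mx (\row_k x k)
  = (\col_k c k) *m (\col_k c k)^T - diag_mx (\row_k c k ^+ 2).
Proof.
move=> inj_x; apply/matrixP => i j.
rewrite mul_diag_mx mul_mx_diag !mxE big_ord1 !mxE.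
have [<-|neq_ij] := eqVneq i j; first by rewrite !mulr0 !mul0r subrr mulr1n subrr.
have dx : x i - x j != 0 by rewrite subr_eq0 (inj_eq inj_x).
by rewrite mulr0n subr0; field.
Qed.

Lemma Bmat_skew (C : numClosedFieldType) (n : nat) (x c : 'I_n -> C) :
  (forall k, x k \is Num.real) -> (forall k, c k \is Num.real) ->
  ((Bmat x c) ^t* = - Bmat x c)%sesqui.
Proof.
move=> x_real c_real; apply/matrixP => i j; rewrite !mxE.
have [_|neq_ij] := eqVneq i j; first by rewrite conjC0 oppr0.
rewrite conj_Creal; last by rewrite !rpredM ?rpredV ?rpredB.
by rewrite -mulrN -invrN opprB (mulrC (c j)).
Qed.

Theorem corollary1 (C : numClosedFieldType) (n : nat) (x c : 'I_n -> C) :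
  (0 < n)%N ->
  (forall k, x k \is Num.real) -> (forall k, c k \is Num.real) ->
  injective x -> (forall k, c k != 0) ->
  exists2 s : seq C, uniq s &
    (size s = n /\ char_poly (Bmat x c) = \prod_(z <- s) ('X - z%:P)).
Proof.
move=> _ x_real c_real inj_x c_neq0.
have skewB := Bmat_skew x_real c_real.
have normalB := skew_normalmx skewB.
have c2_gt0 k : 0 < (\row_i c i ^+ 2) 0 k.
  by rewrite mxE real_exprn_even_gt0 ?c_real ?c_neq0 ?orbT.
have simple := normal_simple_spectrum normalB
  (fun v lam => skew_eigvec_orth_eq0 skewB (Bmat_commutator c inj_x) c2_gt0).
exists [seq spectral_diag (Bmat x c) 0 i | i <- enum 'I_n].
  by rewrite map_inj_uniq ?enum_uniq.
split; first by rewrite size_map size_enum_ord.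
by rewrite big_map big_enum /= char_poly_normal.
Qed.
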